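(* Let $K\subset\mathbb{R}^d$ be nonempty, closed, convex with $\mathrm{B}_d(0)\subseteq K\subseteq R\,\mathrm{B}_d(0)$, let $f$ be convex and $L$-Lipschitz on $K$, let $a,\eta>0$, $(y,s)\in\mathbb{R}^d\times\mathbb{R}$, $Q=\{(x,t):x\in K,f(x)\le at\}$, $z=(y,s-a\eta)$, $\Theta(x,t)=I_Q(x,t)+\frac1{2\eta}\|(x,t)-z\|^2-\frac{a^2\eta}2+as$, and $\zeta(x)=\frac1{2\eta}\|x-y\|^2+\frac1{2\eta}\big[\frac{f(x)}a-(s-a\eta)\big]_+^2$ for $x\in K$. Then: (a) the minimizer of $\Theta$ over $\mathbb{R}^{d+1}$ is $(x_*,t_* )$ with $x_*=\arg\min_{x\in K}\zeta(x)$ and $t_*=\max\{f(x_* )/a,\ s-a\eta\}$; (b) $\zeta$ is $\eta^{-1}$-strongly convex; (c) if $\tilde x\in K$ satisfies $\zeta(\tilde x)-\min_K\zeta\le\frac1{d+1}$ and $\tilde t=\max\{f(\tilde x)/a,s-a\eta\}$, then $\tilde w=(\tilde x,\tilde t)$ satisfies $\|\tilde w-\mathrm{proj}_Q(z)\|\le(1+\frac La)\sqrt{\frac{2\eta}{d+1}}$.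
   Context: $[u]_+=\max\{u,0\}$; $I_Q$ is $0$ on $Q$ and $+\infty$ off $Q$; $\mathrm{proj}_Q(z)=\arg\min_{w\in Q}\|w-z\|$ (which is the minimizer of $\Theta$). *)

From HB Require Import structures.
From mathcomp Require Import all_boot all_order all_algebra.
From mathcomp Require Import all_classical all_reals all_analysis.
Set Implicit Arguments. Unset Strict Implicit. Unset Printing Implicit Defensive.
Import Order.TTheory GRing.Theory Num.Theory.
Import numFieldNormedType.Exports.
Local Open Scope classical_set_scope.
Local Open Scope ring_scope.

Section Defs.
Variables (R : realType) (d : nat).
Notation V := 'rV[R]_d.

Definition sqnormV (x : V) : R := \sum_(i < d) (x ord0 i) ^+ 2.
Definition enormV (x : V) : R := Num.sqrt (sqnormV x).

(* Euclidean norm on R^{d+1} = R^d x R *)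
Definition sqnorm1 (w : V * R) : R := sqnormV w.1 + w.2 ^+ 2.
Definition enorm1 (w : V * R) : R := Num.sqrt (sqnorm1 w).
Definition sub1 (w w' : V * R) : V * R := (w.1 - w'.1, w.2 - w'.2).

Definition cvx_set (K : set V) : Prop :=
  forall x y l, K x -> K y -> 0 <= l <= 1 -> K (l *: x + (1 - l) *: y).

Definition cvx_fun_on (K : set V) (f : V -> R) : Prop :=
  forall x y l, K x -> K y -> 0 <= l <= 1 ->
    f (l *: x + (1 - l) *: y) <= l * f x + (1 - l) * f y.

Definition lipschitz_with_on (K : set V) (L : R) (f : V -> R) : Prop :=
  forall x y, K x -> K y -> `|f x - f y| <= L * enormV (x - y).

Definition strongly_cvx_on (K : set V) (mu : R) (g : V -> R) : Prop :=
  forall x y l, K x -> K y -> 0 <= l <= 1 ->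
    g (l *: x + (1 - l) *: y) <=
      l * g x + (1 - l) * g y - mu / 2 * (l * (1 - l)) * (sqnormV (x - y)).

Definition is_argmin_on (K : set V) (g : V -> R) (x : V) : Prop :=
  K x /\ forall y, K y -> g x <= g y.

Definition pospart (u : R) : R := Num.max u 0.

Definition Qset_epi (K : set V) (f : V -> R) (a : R) : set (V * R) :=
  [set w | K w.1 /\ f w.1 <= a * w.2].

Definition Theta_fun (K : set V) (f : V -> R) (a eta : R) (y : V) (s : R)
  (w : V * R) : \bar R :=
  if `[< Qset_epi K f a w >] then
    ((1 / (2 * eta)) * sqnorm1 (sub1 w (y, s - a * eta))
       - a ^+ 2 * eta / 2 + a * s)%:E
  else +oo%E.

Definition is_global_minimizer (F : V * R -> \bar R) (w : V * R) : Prop :=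
  forall w', (F w <= F w')%E.

Definition zeta_fun (f : V -> R) (a eta : R) (y : V) (s : R) (x : V) : R :=
  (1 / (2 * eta)) * sqnormV (x - y)
  + (1 / (2 * eta)) * (pospart (f x / a - (s - a * eta))) ^+ 2.

Definition is_proj_onto (Q : set (V * R)) (z : V * R) (p : V * R) : Prop :=
  Q p /\ forall w, Q w -> enorm1 (sub1 p z) <= enorm1 (sub1 w z).

End Defs.

From HB Require Import structures.
From mathcomp Require Import all_boot all_order all_algebra.
From mathcomp Require Import all_classical all_reals all_analysis.
From mathcomp Require Import ring lra.
Set Implicit Arguments.
Unset Strict Implicit.
Unset Printing Implicit Defensive.
Import Order.TTheory GRing.Theory Num.Theory.
Import numFieldNormedType.Exports.
Local Open Scope classical_set_scope.
Local Open Scope ring_scope.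

(* Over a point x the closest point of Q to z is (x, max {f(x)/a, s - a eta}),
   and its squared distance to z is exactly 2 eta zeta(x).  Hence minimizing
   Theta, projecting z onto Q and minimizing zeta over K are one problem.
   zeta is 1/(2 eta) times the 2-strongly convex ||x - y||^2 plus the convex
   [f/a - (s - a eta)]_+^2, so it is 1/eta-strongly convex; it has a minimizer
   x0 by compactness of K, which is unique and satisfies the quadratic growth
   ||x - x0||^2 <= 2 eta (zeta(x) - zeta(x0)).  Finally the lift
   x |-> (x, max {f(x)/a, s - a eta}) is (1 + L/a)-Lipschitz, which turns an
   approximate minimizer of zeta into an approximate projection. *)

Section Euclidean.
Variables (R : realType) (d : nat).
Notation V := 'rV[R]_d.

Lemma sqnormV_ge0 (v : V) : 0 <= sqnormV v.
Proof. by apply: sumr_ge0 => i _; exact: sqr_ge0. Qed.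

Lemma sqnormV_eq0 (v : V) : sqnormV v = 0 -> v = 0.
Proof.
move=> /eqP; rewrite /sqnormV psumr_eq0 => [/allP v0|i _]; last exact: sqr_ge0.
apply/matrixP => i j; rewrite mxE (ord1 i).
by have := v0 j (mem_index_enum _); rewrite /= sqrf_eq0 => /eqP.
Qed.

Lemma sqnormV_convex_comb (u v w : V) (l : R) :
  l * sqnormV (u - w) + (1 - l) * sqnormV (v - w)
  = sqnormV (l *: u + (1 - l) *: v - w) + l * (1 - l) * sqnormV (u - v).
Proof.
rewrite /sqnormV !mulr_sumr -!big_split /=; apply: eq_bigr => i _.
by rewrite !mxE; ring.
Qed.

Lemma normr_le_enormV (v : V) : `|v| <= enormV v.
Proof.
change (mx_norm v <= enormV v); rewrite mx_normrE.
apply: bigmax_le => [|[i j] _]; first exact: sqrtr_ge0.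
rewrite (ord1 i) /= /enormV -(sqrtr_sqr (v ord0 j)) ler_wsqrtr //.
by rewrite /sqnormV (bigD1 j) //= lerDl; apply: sumr_ge0 => k _; exact: sqr_ge0.
Qed.

Lemma enormV_le_normr (v : V) : enormV v <= Num.sqrt d%:R * `|v|.
Proof.
have coord_le i : `|v ord0 i| <= `|v|.
  change (`|v ord0 i| <= mx_norm v); rewrite mx_normrE.
  by apply/bigmax_geP; right; exists (ord0, i).
rewrite /enormV -(ger0_norm (normr_ge0 v)) -sqrtr_sqr -sqrtrM ?ler0n //.
apply: ler_wsqrtr; rewrite /sqnormV.
apply: le_trans (_ : \sum_(i < d) `|v| ^+ 2 <= _).
  apply: ler_sum => i _; rewrite -real_normK ?num_real //.
  by rewrite lerXn2r ?nnegrE ?normr_ge0 ?coord_le.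
by rewrite sumr_const card_ord mulr_natl.
Qed.

Lemma enorm1_le (v : V) (t : R) : enorm1 (v, t) <= enormV v + `|t|.
Proof.
have v0 := sqnormV_ge0 v; have s0 := sqrtr_ge0 (sqnormV v).
have t0 := normr_ge0 t; have vE := sqr_sqrtr v0.
have tE : `|t| ^+ 2 = t ^+ 2 by rewrite real_normK ?num_real.
rewrite /enorm1 /sqnorm1 /enormV -(ger0_norm (addr_ge0 s0 t0)) -sqrtr_sqr.
by rewrite ler_wsqrtr //=; nra.
Qed.

Lemma is_proj_ontoE (Q : set (V * R)) (z p : V * R) :
  is_proj_onto Q z p <->
  Q p /\ forall w, Q w -> sqnorm1 (sub1 p z) <= sqnorm1 (sub1 w z).
Proof.
have sqnorm1_ge0 (w : V * R) : 0 <= sqnorm1 w.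
  by apply: addr_ge0; [exact: sqnormV_ge0 | exact: sqr_ge0].
have sqrt_le w : (enorm1 (sub1 p z) <= enorm1 (sub1 w z))
                  = (sqnorm1 (sub1 p z) <= sqnorm1 (sub1 w z)).
  by rewrite /enorm1 ler_sqrt.
by split=> -[Qp p_min]; split=> // w /p_min; rewrite sqrt_le.
Qed.

Lemma continuous_sqnormV (y : V) : continuous (fun x : V => sqnormV (x - y)).
Proof.
apply: continuous_big => [|i _]; first exact: add_continuous.
move=> x; apply: (continuous_comp _ (@exprn_continuous R 2 _)).
rewrite (_ : (fun x => _) = (fun x : V => x ord0 i) - cst (y ord0 i)).
  by apply: continuousB; [exact: coord_continuous | exact: cst_continuous].
by apply/funext => v; rewrite !mxE.
Qed.

Lemma lipschitz_with_on_continuous (K : set V) (L : R) (f : V -> R) :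
  0 <= L -> lipschitz_with_on K L f -> {within K, continuous f}.
Proof.
move=> L0 Lf; apply/subspace_continuousP => x Kx.
apply/cvgrPdist_le => e e0.
set C := Num.sqrt d%:R * L + 1.
have C0 : 0 < C by rewrite ltr_wpDl // mulr_ge0 // sqrtr_ge0.
have /fcvgrPdist_lt x_near : (nbhs x --> x)%classic by [].
rewrite near_withinE; near=> t => Kt.
apply: le_trans (Lf _ _ Kx Kt) _.
apply: le_trans (_ : L * (Num.sqrt d%:R * `|x - t|) <= _).
  by apply: ler_wpM2l => //; exact: enormV_le_normr.
have : `|x - t| < e / C by near: t; apply: x_near; rewrite divr_gt0.
rewrite ltr_pdivlMr // => xt_lt; apply: le_trans (ltW xt_lt).
by rewrite mulrA [L * _]mulrC mulrDr mulr1 [leLHS]mulrC lerDl normr_ge0.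
Unshelve. all: by end_near.
Qed.

Lemma enormV_bounded_closed_compact (K : set V) (Rad : R) :
  closed K -> (forall x, K x -> enormV x <= Rad) -> compact K.
Proof.
move=> Kcl Kb.
have K_bounded : [bounded x | x in K].
  rewrite /bounded_near; near=> M => x Kx /=.
  apply: le_trans (normr_le_enormV x) _; apply: le_trans (Kb _ Kx) _.
  by near: M; apply: nbhs_pinfty_ge; exact: num_real.
exact: bounded_closed_compact.
Unshelve. all: by end_near.
Qed.

Lemma argmin_exists (K : set V) (g : V -> R) :
  K !=set0 -> compact K -> {within K, continuous g} ->
  exists xs, is_argmin_on K g xs.
Proof.
move=> K0 Kc gc; have [xs Kxs xs_min] := EVT_min_rV K0 Kc gc.
exists xs; split; first by rewrite inE in Kxs.
by move=> x Kx; apply: xs_min; rewrite inE.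
Qed.

End Euclidean.

Section PositivePart.
Variable R : realType.
Implicit Types c l u v t : R.

Lemma pospart_eq0 u : u <= 0 -> pospart u = 0.
Proof. by move=> u0; rewrite /pospart max_r. Qed.

Lemma pospart_id u : 0 <= u -> pospart u = u.
Proof. by move=> u0; rewrite /pospart max_l. Qed.

Lemma pospart_ge0 u : 0 <= pospart u.
Proof. by rewrite /pospart le_max lexx orbT. Qed.

Lemma pospart_ge u : u <= pospart u.
Proof. by rewrite /pospart le_max lexx. Qed.

Lemma sqr_pospart_convex (u u1 u2 l : R) : 0 <= l <= 1 ->
  u <= l * u1 + (1 - l) * u2 ->
  pospart u ^+ 2 <= l * pospart u1 ^+ 2 + (1 - l) * pospart u2 ^+ 2.
Proof.
move=> /andP[l0 l1] u_le.
set p1 := pospart u1; set p2 := pospart u2.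
have p1_ge0 : 0 <= p1 := pospart_ge0 u1.
have p2_ge0 : 0 <= p2 := pospart_ge0 u2.
have u1p : u1 <= p1 := pospart_ge u1.
have u2p : u2 <= p2 := pospart_ge u2.
have [u0|u0] := leP u 0.
  rewrite pospart_eq0 // expr0n /=.
  by apply: addr_ge0; apply: mulr_ge0; rewrite ?sqr_ge0 //; lra.
rewrite (pospart_id (ltW u0)).
have u_le_p : u <= l * p1 + (1 - l) * p2.
  have : l * u1 <= l * p1 by rewrite ler_wpM2l.
  have : (1 - l) * u2 <= (1 - l) * p2 by rewrite ler_wpM2l // subr_ge0.
  lra.
have sqr_convex : (l * p1 + (1 - l) * p2) ^+ 2 <= l * p1 ^+ 2 + (1 - l) * p2 ^+ 2.
  rewrite -subr_ge0.
  have -> : l * p1 ^+ 2 + (1 - l) * p2 ^+ 2 - (l * p1 + (1 - l) * p2) ^+ 2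
          = l * (1 - l) * (p1 - p2) ^+ 2 by ring.
  by apply: mulr_ge0; [apply: mulr_ge0; lra | exact: sqr_ge0].
by apply: le_trans _ sqr_convex; rewrite ler_sqr ?nnegrE; lra.
Qed.

Lemma sqr_pospart_subr_le c u t : u <= t -> pospart (u - c) ^+ 2 <= (t - c) ^+ 2.
Proof.
move=> ut; have [uc|uc] := leP (u - c) 0.
  by rewrite pospart_eq0 // expr0n /= sqr_ge0.
by rewrite (pospart_id (ltW uc)) ler_sqr ?nnegrE; lra.
Qed.

Lemma sqr_pospart_subr_eq c u t : u <= t ->
  (t - c) ^+ 2 <= pospart (u - c) ^+ 2 -> t = Num.max u c.
Proof.
move=> ut; have [uc|uc] := leP (u - c) 0.
  rewrite pospart_eq0 // expr0n /= => tc.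
  have /eqP : (t - c) ^+ 2 = 0 by apply/le_anti; rewrite tc sqr_ge0.
  by rewrite sqrf_eq0 subr_eq0 => /eqP ->; rewrite max_r // -subr_le0.
rewrite (pospart_id (ltW uc)) ler_sqr ?nnegrE; try lra.
by move=> tu; rewrite max_l; lra.
Qed.

Lemma sqr_max_subr c u : (Num.max u c - c) ^+ 2 = pospart (u - c) ^+ 2.
Proof.
have [uc|uc] := leP (u - c) 0.
  by rewrite pospart_eq0 // max_r ?subrr // -subr_le0.
by rewrite (pospart_id (ltW uc)) max_l // -subr_ge0 ltW.
Qed.

Lemma ler_dist_max c u v : `|Num.max u c - Num.max v c| <= `|u - v|.
Proof.
have uv := ler_norm (u - v); have vu := ler_norm (v - u).
rewrite distrC in vu; have uv0 := normr_ge0 (u - v).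
rewrite ler_norml; case: (leP u c) => uc; case: (leP v c) => vc.
all: apply/andP; split; lra.
Qed.

End PositivePart.

Section StrongConvexity.
Variables (R : realType) (d : nat) (K : set 'rV[R]_d).
Notation V := 'rV[R]_d.

Lemma strongly_cvx_sqnormV (y : V) : strongly_cvx_on K 2 (fun x => sqnormV (x - y)).
Proof.
move=> x1 x2 l _ _ _.
by rewrite sqnormV_convex_comb divff ?pnatr_eq0 // mul1r addrK.
Qed.

Lemma cvx_fun_on_scale_shift (g : V -> R) (a c : R) : 0 <= a ->
  cvx_fun_on K g -> cvx_fun_on K (fun x => g x * a - c).
Proof.
move=> a0 gc x1 x2 l K1 K2 l01.
by have := ler_wpM2r a0 (gc x1 x2 l K1 K2 l01); lra.
Qed.

Lemma cvx_fun_on_sqr_pospart (g : V -> R) :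
  cvx_fun_on K g -> cvx_fun_on K (fun x => pospart (g x) ^+ 2).
Proof.
by move=> gc x1 x2 l K1 K2 l01; apply: sqr_pospart_convex => //; exact: gc.
Qed.

Lemma strongly_cvxD (mu : R) (g h : V -> R) :
  strongly_cvx_on K mu g -> cvx_fun_on K h ->
  strongly_cvx_on K mu (fun x => g x + h x).
Proof.
move=> gc hc x1 x2 l K1 K2 l01.
by have := gc x1 x2 l K1 K2 l01; have := hc x1 x2 l K1 K2 l01; lra.
Qed.

Lemma strongly_cvxZ (mu c : R) (g : V -> R) : 0 <= c ->
  strongly_cvx_on K mu g -> strongly_cvx_on K (c * mu) (fun x => c * g x).
Proof.
move=> c0 gc x1 x2 l K1 K2 l01.
by have := ler_wpM2l c0 (gc x1 x2 l K1 K2 l01); lra.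
Qed.

(* Comparing g at x and at the convex combination l x + (1 - l) xs gives
   g x - g xs >= (1 - l) mu/2 ||x - xs||^2 for every l in (0, 1]. *)
Lemma strongly_cvx_argmin_growth (mu : R) (g : V -> R) (xs x : V) :
  cvx_set K -> strongly_cvx_on K mu g -> 0 <= mu ->
  is_argmin_on K g xs -> K x -> mu / 2 * sqnormV (x - xs) <= g x - g xs.
Proof.
move=> Kc gc mu0 [Kxs xs_min] Kx.
set A := g x - g xs; set B := mu / 2 * sqnormV (x - xs).
have A0 : 0 <= A by rewrite subr_ge0 xs_min.
have B0 : 0 <= B by rewrite mulr_ge0 ?divr_ge0 ?sqnormV_ge0.
have growth_l l : 0 < l <= 1 -> B * (1 - l) <= A.
  move=> /andP[l0 l1]; have l01 : 0 <= l <= 1 by rewrite l1 ltW.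
  have := gc x xs l Kx Kxs l01; have := xs_min _ (Kc x xs l Kx Kxs l01).
  have -> : mu / 2 * (l * (1 - l)) * sqnormV (x - xs) = l * (B * (1 - l)).
    by rewrite /B; ring.
  by move=> ge_min le_comb; rewrite -(ler_pM2l l0) /A; lra.
rewrite leNgt; apply/negP => AB.
have B2_gt0 : 0 < 2 * B by lra.
set l := (B - A) / (2 * B).
have lE : l * (2 * B) = B - A by rewrite mulfVK ?gt_eqF.
have l_gt0 : 0 < l by rewrite divr_gt0 // subr_gt0.
have l_le1 : l <= 1 by rewrite ler_pdivrMr // mul1r; lra.
by have := growth_l l; rewrite l_gt0 l_le1 => /(_ isT); lra.
Qed.

Lemma strongly_cvx_argmin_unique (mu : R) (g : V -> R) (x1 x2 : V) :
  cvx_set K -> strongly_cvx_on K mu g -> 0 < mu ->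
  is_argmin_on K g x1 -> is_argmin_on K g x2 -> x1 = x2.
Proof.
move=> Kc gc mu0 x1_min [Kx2 x2_min]; have [Kx1 x1_le] := x1_min.
have := strongly_cvx_argmin_growth Kc gc (ltW mu0) x1_min Kx2.
have -> : g x2 - g x1 = 0 by apply/eqP; rewrite subr_eq0 eq_le x1_le // x2_min.
rewrite pmulr_rle0 ?divr_gt0 // => sq_le0.
apply/esym/subr0_eq/sqnormV_eq0/le_anti.
by rewrite sq_le0 sqnormV_ge0.
Qed.

End StrongConvexity.

Section Zeta.
Variables (R : realType) (d : nat) (K : set 'rV[R]_d) (f : 'rV[R]_d -> R).
Variables (a eta : R) (y : 'rV[R]_d) (s : R).
Hypotheses (a_gt0 : 0 < a) (eta_gt0 : 0 < eta).
Notation V := 'rV[R]_d.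
Local Notation ze := (zeta_fun f a eta y s).
Local Notation z := (y, s - a * eta).
Local Notation Q := (Qset_epi K f a).
Local Notation lift x := (x, Num.max (f x / a) (s - a * eta)).

Let c_gt0 : 0 < (2 * eta)^-1.
Proof. by rewrite invr_gt0 mulr_gt0. Qed.

Lemma zetaE x :
  ze x = (2 * eta)^-1 * (sqnormV (x - y) + pospart (f x / a - (s - a * eta)) ^+ 2).
Proof. by rewrite /zeta_fun div1r mulrDr. Qed.

Lemma zeta_strongly_cvx : cvx_fun_on K f -> strongly_cvx_on K eta^-1 ze.
Proof.
move=> fc; rewrite (_ : eta^-1 = (2 * eta)^-1 * 2); last first.
  by rewrite invfM mulrAC mulVf ?mul1r // pnatr_eq0.
rewrite (_ : ze = fun x => (2 * eta)^-1 * (sqnormV (x - y)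
    + pospart (f x / a - (s - a * eta)) ^+ 2)); last exact/funext/zetaE.
apply: strongly_cvxZ; first exact: ltW.
apply: strongly_cvxD; first exact: strongly_cvx_sqnormV.
by apply: cvx_fun_on_sqr_pospart; apply: cvx_fun_on_scale_shift; rewrite ?invr_ge0 ?ltW.
Qed.

Lemma zeta_continuous (L : R) :
  0 <= L -> lipschitz_with_on K L f -> {within K, continuous ze}.
Proof.
move=> L0 Lf.
have dist_c : {within K, continuous (fun x : V => sqnormV (x - y))}.
  exact/continuous_subspaceT/continuous_sqnormV.
have fc := lipschitz_with_on_continuous L0 Lf.
set c := s - a * eta.
have lin_c : continuous (fun u : R => u / a - c).
  rewrite (_ : (fun u => _) = id \* cst a^-1 - cst c) //.
  move=> u; apply: continuousB; last exact: cst_continuous.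
  by apply: continuousM; [exact: cvg_id | exact: cst_continuous].
have max_c : continuous (fun u : R => pospart (u / a - c)).
  rewrite (_ : (fun u => _) = (fun u => u / a - c) \max cst 0) //.
  by move=> u; apply: continuous_max; [exact: lin_c | exact: cst_continuous].
have pos_c : continuous (fun u : R => pospart (u / a - c) ^+ 2).
  rewrite (_ : (fun u => _)
             = (fun u => pospart (u / a - c)) \* (fun u => pospart (u / a - c))) //.
  by move=> u; apply: continuousM; exact: max_c.
rewrite (_ : ze = cst (2 * eta)^-1 \* ((fun x => sqnormV (x - y))
    \+ ((fun u => pospart (u / a - c) ^+ 2) \o f))); last exact/funext/zetaE.
move=> x; apply: continuousM; first exact: cst_continuous.
by apply: continuousD; [exact: dist_c | exact: continuous_comp (fc x) (pos_c _)].
Qed.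

Lemma lift_in_epi x : K x -> Q (lift x).
Proof. by move=> Kx; split=> //=; rewrite mulrC -ler_pdivrMr // le_max lexx. Qed.

Lemma zeta_le_sqdist w : Q w -> ze w.1 <= (2 * eta)^-1 * sqnorm1 (sub1 w z).
Proof.
case: w => x t [/= _ ft]; rewrite zetaE ler_pM2l // lerD2l.
by apply: sqr_pospart_subr_le; rewrite ler_pdivrMr // mulrC.
Qed.

Lemma zeta_eq_sqdist_lift x : ze x = (2 * eta)^-1 * sqnorm1 (sub1 (lift x) z).
Proof. by rewrite zetaE /sqnorm1 /= sqr_max_subr. Qed.

Lemma epi_sqdist_le_lift w : Q w ->
  sqnorm1 (sub1 w z) <= sqnorm1 (sub1 (lift w.1) z) -> w = lift w.1.
Proof.
case: w => x t [/= _ ft]; rewrite /sqnorm1 /= lerD2l sqr_max_subr => t_le.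
by congr (_, _); apply: sqr_pospart_subr_eq t_le; rewrite ler_pdivrMr // mulrC.
Qed.

Lemma is_proj_onto_epi_lift xs :
  is_argmin_on K ze xs -> (forall x, is_argmin_on K ze x -> x = xs) ->
  forall p, is_proj_onto Q z p <-> p = lift xs.
Proof.
move=> [Kxs xs_min] xs_uniq p; rewrite is_proj_ontoE.
have lift_closest w : Q w -> sqnorm1 (sub1 (lift xs) z) <= sqnorm1 (sub1 w z).
  move=> Qw; rewrite -(ler_pM2l c_gt0) -zeta_eq_sqdist_lift.
  exact: le_trans (xs_min _ Qw.1) (zeta_le_sqdist Qw).
split=> [[Qp p_min]|->]; last by split=> //; exact: lift_in_epi.
have p_closest := p_min _ (lift_in_epi Kxs).
have p1E : p.1 = xs.
  apply: xs_uniq; split=> [|x Kx]; first exact: Qp.1.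
  apply: le_trans (zeta_le_sqdist Qp) _; apply: le_trans (xs_min _ Kx).
  by rewrite zeta_eq_sqdist_lift ler_pM2l.
by rewrite (epi_sqdist_le_lift Qp) p1E // p1E.
Qed.

Lemma Theta_global_minimizerE w : Q !=set0 ->
  is_global_minimizer (Theta_fun K f a eta y s) w <-> is_proj_onto Q z w.
Proof.
move=> [w0 Qw0]; rewrite is_proj_ontoE.
set k := - a ^+ 2 * eta / 2 + a * s.
have ThQ w' : Q w' ->
    Theta_fun K f a eta y s w' = ((2 * eta)^-1 * sqnorm1 (sub1 w' z) + k)%:E.
  by move=> Qw'; rewrite /Theta_fun asboolT // /k; congr (_%:E); ring.
have ThnQ w' : ~ Q w' -> Theta_fun K f a eta y s w' = +oo%E.
  by move=> nQw'; rewrite /Theta_fun asboolF.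
split=> [w_min|[Qw w_min] w'].
  have Qw : Q w.
    have [//|nQw] := pselect (Q w).
    by have := w_min w0; rewrite ThnQ // ThQ // leye_eq.
  split=> // w' Qw'; have := w_min w'.
  by rewrite !ThQ // lee_fin lerD2r ler_pM2l.
have [Qw'|nQw'] := pselect (Q w'); last by rewrite (ThnQ w') // leey.
by rewrite !ThQ // lee_fin lerD2r ler_pM2l // w_min.
Qed.

Lemma lift_dist_le (L : R) x x' : lipschitz_with_on K L f -> K x -> K x' ->
  enorm1 (sub1 (lift x) (lift x')) <= (1 + L / a) * enormV (x - x').
Proof.
move=> Lf Kx Kx'; apply: le_trans (enorm1_le _ _) _.
rewrite mulrDl mul1r lerD2l; apply: le_trans (ler_dist_max _ _ _) _.
have ai_gt0 : 0 < a^-1 by rewrite invr_gt0.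
by rewrite -mulrBl normrM (gtr0_norm ai_gt0) mulrAC ler_pM2r //; exact: Lf.
Qed.

End Zeta.

Theorem lemma18 (R : realType) (d : nat) (K : set 'rV[R]_d) (Rad : R)
  (f : 'rV[R]_d -> R) (L a eta : R) (y : 'rV[R]_d) (s : R) :
  K !=set0 -> topology_structure.closed K -> cvx_set K ->
  (forall x, enormV x <= 1 -> K x) ->
  (forall x, K x -> enormV x <= Rad) ->
  cvx_fun_on K f -> 0 <= L -> lipschitz_with_on K L f ->
  0 < a -> 0 < eta ->
  let z := (y, s - a * eta) in
  let Q := Qset_epi K f a in
  let Th := Theta_fun K f a eta y s in
  let ze := zeta_fun f a eta y s in
  (* (a) *)
  (exists xs : 'rV[R]_d,
     is_argmin_on K ze xs /\ (forall x', is_argmin_on K ze x' -> x' = xs) /\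
     let ts := Num.max (f xs / a) (s - a * eta) in
     (forall w, is_global_minimizer Th w <-> w = (xs, ts)) /\
     is_proj_onto Q z (xs, ts)) /\
  (* (b) *)
  strongly_cvx_on K eta^-1 ze /\
  (* (c) *)
  (forall xt : 'rV[R]_d, K xt ->
     (forall x, K x -> ze xt - ze x <= 1 / (d.+1)%:R) ->
     let tt := Num.max (f xt / a) (s - a * eta) in
     forall p, is_proj_onto Q z p ->
       enorm1 (sub1 (xt, tt) p) <= (1 + L / a) * Num.sqrt (2 * eta / (d.+1)%:R)).
Proof.
move=> K0 Kcl Kcvx _ Kb fcvx L0 Lf a0 eta0 z Q Th ze.
have ze_scvx : strongly_cvx_on K eta^-1 ze by exact: zeta_strongly_cvx.
have eta_inv_gt0 : 0 < eta^-1 by rewrite invr_gt0.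
have [xs xs_min] : exists xs, is_argmin_on K ze xs.
  apply: argmin_exists K0 (enormV_bounded_closed_compact Kcl Kb) _.
  exact: zeta_continuous L0 Lf.
have xs_uniq x : is_argmin_on K ze x -> x = xs.
  by move/(strongly_cvx_argmin_unique Kcvx ze_scvx eta_inv_gt0); apply.
have projE := is_proj_onto_epi_lift a0 eta0 xs_min xs_uniq.
split; last split=> //.
  exists xs; do 2!split=> //; split=> [w|]; last exact/projE.
  rewrite -projE; apply: Theta_global_minimizerE => //.
  exists (xs, Num.max (f xs / a) (s - a * eta)).
  by apply: lift_in_epi => //; exact: xs_min.1.
move=> xt Kxt xt_gap tt p /projE ->.
apply: le_trans (lift_dist_le eta s a0 Lf Kxt xs_min.1) _.
apply: ler_wpM2l; first by apply: addr_ge0; rewrite // divr_ge0 // ltW.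
apply: ler_wsqrtr.
have growth := strongly_cvx_argmin_growth Kcvx ze_scvx (ltW eta_inv_gt0) xs_min Kxt.
have n_gt0 : 0 < (d.+1)%:R :> R by rewrite ltr0n.
rewrite -(ler_pM2l (_ : 0 < eta^-1 / 2)) ?divr_gt0 //.
rewrite (_ : eta^-1 / 2 * (2 * eta / _) = 1 / (d.+1)%:R); last first.
  by field; rewrite !gt_eqF.
exact: le_trans growth (xt_gap _ xs_min.1).
Qed.
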